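(* Let $P$ be a finite geometric lattice of rank $n$ with atom ordering $a_1<\dots<a_m$ and its associated minimal labeling, and let $S=\{s_1<\dots<s_k\}\subseteq\{1,\dots,n-1\}$. Consider any shelling of the order complex of $P^S$ obtained as a linear extension of the order on maximal chains $\gamma$ of $P^S$ given by comparing, lexicographically, the label sequences of $f_{first}(\gamma)$. Then the homology facets of this shelling are exactly those maximal chains $\gamma$ of $P^S$ for which $f_{rib}(f_{first}(\gamma))$ is a standard filling of $\mathrm{Rib}(s_1,s_2-s_1,\dots,n-s_k)$ whose reading word is an $\mathrm{NBC}^+$ basis of $P$.
   Context: The minimal labeling labels each cover relation $u\prec v$ by the atom $\min(A(v)\setminus A(u))$, where $A(x)$ is the set of atoms below $x$; the label sequence of a maximal chain $\hat0\prec u_1\prec\dots\prec\hat1$ is the sequence of its edge labels. $P^S$ is the subposet of elements with ranks in $S$. For a maximal chain $\gamma$ of $P^S$, $f_{first}(\gamma)$ is the maximal chain of $P$ containing $\gamma$ whose label sequence is lexicographically smallest. For a maximal chain $M$ of $P$, $f_{rib}(M)$ is the filling of $\mathrm{Rib}(s_1,\dots,n-s_k)$ whose reading word is the label sequence of $M$. A shelling is an order $F_1,F_2,\dots$ of facets such that each $\overline{F_j}\cap\bigcup_{i<j}\overline{F_i}$ is pure of codimension one in $\overline{F_j}$; a homology facet is one with $\overline{F_j}\cap\bigcup_{i<j}\overline{F_i}=\partial F_j$. $\mathrm{Rib}(r_1,\dots,r_p)$: ribbon with rows of lengths $r_1,\dots,r_p$ bottom to top, each row starting directly above the last box of the row below;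 reading word: left to right, bottom row to top; standard: entries increase in atom order left to right along rows and top to bottom down columns. NBC independent set: atoms $\{b_1,\dots,b_l\}$ whose join has rank $l$ and such that every atom outside the set below the join is later in the order than some $b_j$. $\mathrm{NBC}^+$ basis: ordered NBC independent set $(b_1,\dots,b_n)$ with $b_j=\min(A(b_1\vee\dots\vee b_j)\setminus A(b_1\vee\dots\vee b_{j-1}))$ for all $j$. *)

From HB Require Import structures.
From mathcomp Require Import all_boot all_order.
Set Implicit Arguments. Unset Strict Implicit. Unset Printing Implicit Defensive.
Import Order.Theory.

Section Geometric.
Context {disp : Order.disp_t} {L : finTBLatticeType disp}.

Definition covers (u v : L) : bool :=
  (u < v)%O && [forall z : L, ~~ ((u < z)%O && (z < v)%O)].

Definition atom (a : L) : bool := covers Order.bottom a.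

Definition is_rank (rk : L -> nat) : Prop :=
  rk Order.bottom = 0 /\ forall u v : L, covers u v -> rk v = (rk u).+1.

Definition semimodular (rk : L -> nat) : Prop :=
  forall x y : L, rk (Order.meet x y) + rk (Order.join x y) <= rk x + rk y.

Definition atomistic : Prop :=
  forall x : L, x = \big[Order.join/Order.bottom]_(a : L | atom a && (a <= x)%O) a.

Definition geometric (rk : L -> nat) : Prop :=
  is_rank rk /\ semimodular rk /\ atomistic.

(** an atom ordering a_1 < ... < a_m, given as the list [a_1; ...; a_m] *)
Definition atom_ordering (ao : seq L) : Prop :=
  uniq ao /\ forall a : L, (a \in ao) = atom a.

Definition aord (ao : seq L) (a b : L) : bool := index a ao < index b ao.

(** minimal labeling: lambda(u, v) = min (A(v) \ A(u)) in the atom order *)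
Definition minlab (ao : seq L) (u v : L) : L :=
  nth Order.bottom ao (find (fun a => (a <= v)%O && ~~ (a <= u)%O) ao).

(** maximal chain 0 = u_0 ≺ u_1 ≺ ... ≺ u_n = 1 of L, represented by [u_1; ...; u_n] *)
Definition maxchainP (M : seq L) : bool :=
  path covers Order.bottom M && (last Order.bottom M == Order.top).

Definition labels (ao : seq L) (M : seq L) : seq L :=
  pairmap (minlab ao) Order.bottom M.

Fixpoint lexlt (s t : seq nat) : bool :=
  match s, t with
  | [::], [::] => false
  | [::], _ :: _ => true
  | _ :: _, [::] => false
  | x :: s', y :: t' => (x < y) || ((x == y) && lexlt s' t')
  end.
Definition lexle (s t : seq nat) : bool := (s == t) || lexlt s t.

Definition labword (ao : seq L) (M : seq L) : seq nat :=
  map (fun a => index a ao) (labels ao M).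

(** chains of the rank-selected subposet P^S (S given as the list s) *)
Definition chainS (rk : L -> nat) (s : seq nat) (g : {set L}) : bool :=
  [forall x in g, rk x \in s] &&
  [forall x in g, forall y in g, (x <= y)%O || (y <= x)%O].

(** maximal chains of P^S (= facets of the order complex of P^S) *)
Definition maxchainS (rk : L -> nat) (s : seq nat) (g : {set L}) : bool :=
  chainS rk s g &&
  [forall g' : {set L}, (chainS rk s g' && (g \subset g')) ==> (g' == g)].

(** M = f_first(g): the maximal chain of P containing g with
    lexicographically smallest label sequence *)
Definition is_first (ao : seq L) (g : {set L}) (M : seq L) : Prop :=
  [/\ maxchainP M, {subset g <= Order.bottom :: M} &
      forall M' : seq L, maxchainP M' -> {subset g <= Order.bottom :: M'} ->
        lexle (labword ao M) (labword ao M')].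

(** the facet order F_1, F_2, ... (list F) is a linear extension of the order
    comparing lexicographically the label sequences of f_first *)
Definition first_linext (ao : seq L) (F : seq {set L}) : Prop :=
  forall i j, i < j < size F ->
  forall Mi Mj, is_first ao (nth set0 F i) Mi -> is_first ao (nth set0 F j) Mj ->
    ~~ lexlt (labword ao Mj) (labword ao Mi).

(** faces of closure(F_j) ∩ ⋃_{i<j} closure(F_i) *)
Definition earlier_face (F : seq {set L}) (j : nat) (G : {set L}) : Prop :=
  G \subset nth set0 F j /\ exists2 i, i < j & G \subset nth set0 F i.

(** shelling: each closure(F_j) ∩ ⋃_{i<j} closure(F_i) is pure of codimension one
    in closure(F_j) *)
Definition shelling (F : seq {set L}) : Prop :=
  forall j, j < size F -> forall G, earlier_face F j G ->
    exists H : {set L}, [/\ earlier_face F j H, G \subset H &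
                          #|H| = #|nth set0 F j| - 1].

(** homology facet: closure(F_j) ∩ ⋃_{i<j} closure(F_i) = ∂F_j *)
Definition homology_facet (F : seq {set L}) (j : nat) : Prop :=
  forall G : {set L}, G \subset nth set0 F j ->
    (earlier_face F j G <-> G \proper nth set0 F j).

Definition nbc_indep (rk : L -> nat) (ao : seq L) (b : seq L) : Prop :=
  let J := \big[Order.join/Order.bottom]_(x <- b) x in
  [/\ all atom b, uniq b, rk J = size b &
      forall a : L, atom a -> a \notin b -> (a <= J)%O ->
        exists2 bj, bj \in b & aord ao bj a].

Definition nbc_plus (rk : L -> nat) (ao : seq L) (b : seq L) : Prop :=
  nbc_indep rk ao b /\ size b = rk Order.top /\
  forall j, j < size b ->
    nth Order.bottom b j =
      minlab ao (\big[Order.join/Order.bottom]_(x <- take j b) x)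
                (\big[Order.join/Order.bottom]_(x <- take j.+1 b) x).

End Geometric.

(** Rib(r_1, ..., r_p): rows of lengths r_1..r_p from bottom to top,
    each row starting directly above the last box of the row below.
    Boxes are numbered 0..(sumn r)-1 in reading order (left to right, bottom row
    to top row).  Box k lies in row [rib_row r k] (0 = bottom row) and column
    [rib_col r k] (0 = leftmost column). *)
Definition rib_row (r : seq nat) (k : nat) : nat :=
  count (fun t => t <= k) (scanl addn 0 r).
Definition rib_col (r : seq nat) (k : nat) : nat := k - rib_row r k.

(** the composition (s_1, s_2 - s_1, ..., n - s_k) *)
Definition rib_comp (n : nat) (s : seq nat) : seq nat :=
  pairmap (fun a b => b - a) 0 (rcons s n).

Section Fillings.
Context {disp : Order.disp_t} {L : finTBLatticeType disp}.

(** f_rib: the filling of the ribbon whose reading word is w (box k gets w_k) *)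
Definition rib_fill (w : seq L) : nat -> L := fun k => nth Order.bottom w k.

Definition standard_filling (ao : seq L) (r : seq nat) (f : nat -> L) : Prop :=
  forall k l, k < sumn r -> l < sumn r ->
    (rib_row r k = rib_row r l -> rib_col r k < rib_col r l -> aord ao (f k) (f l)) /\
    (rib_col r k = rib_col r l -> rib_row r l < rib_row r k -> aord ao (f k) (f l)).
End Fillings.

From mathcomp Require Import all_boot all_order zify.
Set Implicit Arguments. Unset Strict Implicit. Unset Printing Implicit Defensive.
Import Order.Theory.

(* For the minimal labeling of a geometric lattice, the first chain M = f_first(γ) of a facet γ of
   P^S ascends at every rank x outside S: there u_x is not in γ, and replacing it by
   u_{x-1} ∨ λ(u_x ≺ u_{x+1}) would give a lexicographically smaller chain through γ.
   At a rank x in S, a descent lets the same swap produce a smaller chain through γ \ {u_x},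
   whose facet therefore comes before γ; as every proper face of γ misses some u_x, γ is then a
   homology facet. An ascent at x in S makes M increasing between the neighbours of x in
   S ∪ {0, n}, so every maximal chain through γ \ {u_x} avoiding u_x has a larger label word
   than M, and γ \ {u_x} lies in no earlier facet. Having descents exactly at S means that the
   label word fills Rib(s_1, s_2 - s_1, ..., n - s_k) standardly, and the label word of any
   maximal chain is an NBC+ basis. *)

Lemma homo_ltn_itv (T : Type) (r : T -> T -> Prop) (f : nat -> T) a b :
  (forall y x z, r x y -> r y z -> r x z) ->
  (forall t, a <= t < b -> r (f t) (f t.+1)) ->
  forall k l, a <= k -> k < l -> l <= b -> r (f k) (f l).
Proof.
move=> r_trans f_step k l ak kl lb; pose D := [pred t | a <= t <= b].
have D_convex : {in D &, forall i j t, i < t < j -> t \in D}.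
  move=> i j /andP[ai _] /andP[_ jb] t /andP[it tj].
  by rewrite inE /= (leq_trans ai (ltnW it)) (leq_trans (ltnW tj) jb).
apply: (homo_ltn_in r_trans D_convex) => //.
- by move=> t /andP[a_t _] /andP[_ tb]; apply: f_step; rewrite a_t tb.
- by rewrite inE /= ak (leq_trans (ltnW kl) lb).
- by rewrite inE /= lb (leq_trans ak (ltnW kl)).
Qed.

Lemma exists_crossing (P : pred nat) a b : a <= b -> ~~ P a -> P b ->
  exists q, [/\ a <= q, q < b, ~~ P q & P q.+1].
Proof.
elim: b => [|b IH]; first by rewrite leqn0 => /eqP-> /negP.
rewrite leq_eqVlt => /orP[/eqP-> /negP//|]; rewrite ltnS => ab nPa Pb.
case: (boolP (P b)) => [Pb'|nPb]; last by exists b.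
by have [q [? ? ? ?]] := IH ab nPa Pb'; exists q; split => //; apply: ltnW.
Qed.

Lemma nearest_below (P : pred nat) x : 0 < x -> P 0 ->
  exists a, [/\ a < x, P a & forall y, a < y < x -> ~~ P y].
Proof.
move=> x0 P0; have ex : exists t, (t < x) && P t by exists 0; rewrite x0 P0.
have bound t : (t < x) && P t -> t <= x by case/andP=> /ltnW.
case: (ex_maxnP ex bound) => a /andP[ax Pa] amax; exists a; split => // y /andP[ay yx].
by apply/negP => Py; have := amax y; rewrite yx Py => /(_ isT); lia.
Qed.

Lemma nearest_above (P : pred nat) x n : x < n -> P n ->
  exists b, [/\ x < b, b <= n, P b & forall y, x < y < b -> ~~ P y].
Proof.
move=> xn Pn; have ex : exists t, (x < t) && P t by exists n; rewrite xn Pn.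
case: (ex_minnP ex) => b /andP[xb Pb] bmin; exists b; split => //.
  by apply: bmin; rewrite xn Pn.
by move=> y /andP[xy yb]; apply/negP => Py; have := bmin y; rewrite xy Py => /(_ isT); lia.
Qed.

Section CountingSteps.
Variables (X : nat -> nat) (P : pred nat).
Hypothesis X_succ : forall k, X k.+1 = X k + P k.+1.

Lemma succ_homo_leq : {homo X : p q / p <= q}.
Proof.
apply: (homo_leq (r := leq)) => // [y x z|t]; first exact: leq_trans.
by rewrite X_succ leq_addr.
Qed.

Lemma succ_flat_false k l : k <= l -> X k = X l -> forall i, k < i <= l -> ~~ P i.
Proof.
elim: l => [|l IH]; first by rewrite leqn0 => /eqP-> _ i; lia.
rewrite leq_eqVlt => /orP[/eqP<- _ i|]; first lia.
rewrite ltnS => kl; rewrite X_succ => Xkl.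
have Xkl' := succ_homo_leq kl.
have [{}Xkl Pl] : X k = X l /\ P l.+1 = false by case: (P l.+1) Xkl => /=; lia.
move=> i /andP[ki]; rewrite leq_eqVlt => /orP[/eqP->|il]; first by rewrite Pl.
by apply: IH => //; rewrite ki.
Qed.

End CountingSteps.

Lemma lexlt_irr w : lexlt w w = false.
Proof. by elim: w => //= x w ->; rewrite ltnn eqxx. Qed.

Lemma lexlt_trans u v w : lexlt u v -> lexlt v w -> lexlt u w.
Proof.
elim: u v w => [|x u IH] [|y v] [|z w] //=.
case/orP=> [xy|/andP[/eqP-> uv]] /orP[yz|/andP[/eqP<- vw]].
- by rewrite (ltn_trans xy yz).
- by rewrite xy.
- by rewrite yz.
- by rewrite (IH _ _ uv vw) eqxx orbT.
Qed.

Lemma lexle_lt_trans u v w : lexle u v -> lexlt v w -> lexlt u w.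
Proof. by case/orP=> [/eqP->//|]; apply: lexlt_trans. Qed.

Lemma lexle_trans u v w : lexle u v -> lexle v w -> lexle u w.
Proof.
case/orP=> [/eqP->//|uv] /orP[/eqP<-|vw]; rewrite /lexle ?uv ?(lexlt_trans uv vw) orbT //.
Qed.

Lemma lexle_total u v : lexle u v || lexle v u.
Proof.
rewrite /lexle; elim: u v => [|x u IH] [|y v] //=.
have [xy|xy|->] := ltngtP x y; rewrite ?eqxx ?orbT //=.
rewrite !eqseq_cons eqxx /=.
by case/orP: (IH v) => /orP[->|->]; rewrite ?orbT // eq_sym => ->; rewrite orbT.
Qed.

Lemma lexlt_map_iota (A B : nat -> nat) k m r : k <= r < k + m ->
  (forall q, k <= q < r -> A q = B q) -> A r < B r ->
  lexlt (map A (iota k m)) (map B (iota k m)).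
Proof.
elim: m k => [|m IH] k; first by rewrite addn0; lia.
move=> /andP[kr rkm] AB ABr /=.
case: (ltngtP k r) => [{}kr|rk|->]; [|lia|by rewrite ABr].
rewrite AB ?leqnn ?kr // eqxx ltnn /=; apply: IH => //; first lia.
by move=> q /andP[kq qr]; apply: AB; rewrite qr ltnW.
Qed.

Lemma exists_lexle_min (T : eqType) (key : T -> seq nat) (l : seq T) : l != [::] ->
  exists2 m, m \in l & forall y, y \in l -> lexle (key m) (key y).
Proof.
elim: l => // a l IH _; case: (eqVneq l [::]) => [->|/IH[m ml mmin]].
  by exists a; rewrite ?inE // => y; rewrite inE => /eqP->; rewrite /lexle eqxx.
case/orP: (lexle_total (key a) (key m)) => am.
  exists a; rewrite ?inE ?eqxx // => y; rewrite inE => /orP[/eqP->|yl].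
    by rewrite /lexle eqxx.
  exact: lexle_trans am (mmin y yl).
exists m; rewrite ?inE ?ml ?orbT // => y; rewrite inE => /orP[/eqP->//|].
exact: mmin.
Qed.

Lemma scanl_addn_pairmap_subn x t : path leq x t ->
  scanl addn x (pairmap (fun a b => b - a) x t) = t.
Proof. by elim: t x => //= y t IH x /andP[xy pt]; rewrite subnKC // IH. Qed.

Lemma sumn_pairmap_subn x t : path leq x t ->
  sumn (pairmap (fun a b => b - a) x t) + x = last x t.
Proof.
elim: t x => //= y t IH x /andP[xy pt].
by rewrite -addnA addnCA subnK // IH.
Qed.

Definition standard_nat_filling (r : seq nat) (g : nat -> nat) :=
  forall k l, k < sumn r -> l < sumn r ->
    (rib_row r k = rib_row r l -> rib_col r k < rib_col r l -> g k < g l) /\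
    (rib_col r k = rib_col r l -> rib_row r l < rib_row r k -> g k < g l).

Section RibbonOfComposition.
Variables (n : nat) (s : seq nat).
Hypotheses (s_sorted : sorted ltn s) (s_range : all (fun x => 0 < x < n) s).

Let r := rib_comp n s.
Let row k := count (fun t => t <= k) s.

Lemma path_leq_rcons_n : path leq 0 (rcons s n).
Proof.
rewrite rcons_path path_sortedE; last exact: leq_trans.
rewrite (sub_sorted (fun a b => @ltnW a b) s_sorted) andbT; apply/andP; split.
  by apply/allP.
have := mem_last 0 s; rewrite inE => /orP[/eqP->//|].
by move/(allP s_range) => /andP[_ /ltnW].
Qed.

Lemma sumn_rib_comp : sumn r = n.
Proof. by have := sumn_pairmap_subn path_leq_rcons_n; rewrite addn0 last_rcons. Qed.

Lemma rib_row_comp k : k < n -> rib_row r k = row k.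
Proof.
move=> kn; rewrite /rib_row scanl_addn_pairmap_subn ?path_leq_rcons_n //.
by rewrite -cats1 count_cat /= leqNgt kn !addn0.
Qed.

Let row_succ k : row k.+1 = row k + (k.+1 \in s).
Proof.
rewrite /row -(count_uniq_mem _ (sorted_uniq ltn_trans ltnn s_sorted)).
elim: s => //= y l ->; rewrite (leq_eqVlt y) ltnS.
by case: (eqVneq y k.+1) => [->|ne] /=; rewrite ?eqxx ?ltnn ?(negPf ne) /=; lia.
Qed.

Let row_le k : row k <= k.
Proof.
elim: k => [|k IH]; last by rewrite row_succ; case: (k.+1 \in s) => /=; lia.
rewrite leqn0 eqn0Ngt -has_count; apply/hasPn => y /(allP s_range) /andP[y0 _].
by rewrite /= -ltnNge.
Qed.

Let col_succ k : k.+1 - row k.+1 = k - row k + (k.+1 \notin s).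
Proof. by rewrite row_succ; have := row_le k; case: (k.+1 \in s) => /=; lia. Qed.

Lemma rib_col_comp k : k < n -> rib_col r k = k - row k.
Proof. by move=> kn; rewrite /rib_col rib_row_comp. Qed.

Lemma standard_rib_compP g : standard_nat_filling r g <->
  (forall x, 0 < x < n -> if x \in s then g x < g x.-1 else g x.-1 < g x).
Proof.
rewrite /standard_nat_filling sumn_rib_comp; split.
  move=> std x /andP[x0 xn]; have x1n : x.-1 < n by lia.
  (* Box [x] lies directly above box [x.-1] if [x \in s], and just right of it otherwise. *)
  have := row_succ x.-1; have := col_succ x.-1; rewrite prednK // => col_x row_x.
  have [[_ same_col] [same_row _]] := (std x x.-1 xn x1n, std x.-1 x x1n xn).
  move: same_col same_row; rewrite !rib_row_comp // !rib_col_comp // col_x row_x.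
  by case: (x \in s) => /= same_col same_row; [apply: same_col | apply: same_row]; lia.
move=> gstep k l kn ln; rewrite !rib_col_comp // !rib_row_comp //; split=> [same_row lt_col | same_col lt_row].
- have kl : k < l.
    by rewrite ltnNge; apply/negP => /(succ_homo_leq (P := fun x => x \notin s) col_succ); lia.
  have nos := succ_flat_false (P := fun x => x \in s) row_succ (ltnW kl) same_row.
  apply: (homo_ltn_itv (r := fun a b => a < b) (f := g) (a := k) (b := l)) => // [y x z|t /andP[kt tl]].
    exact: ltn_trans.
  have := gstep t.+1; rewrite (negPf (nos t.+1 _)) ?ltnS ?kt ?tl //; apply; lia.
- have lk : l < k.
    by rewrite ltnNge; apply/negP => /(succ_homo_leq (P := fun x => x \in s) row_succ); lia.
  have alls := succ_flat_false (P := fun x => x \notin s) col_succ (ltnW lk) (esym same_col).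
  apply: (homo_ltn_itv (r := fun a b => b < a) (f := g) (a := l) (b := k)) => // [y x z|t /andP[lt tk]].
    by move=> xy yz; apply: ltn_trans xy.
  have := gstep t.+1; rewrite (negbNE (alls t.+1 _)) ?ltnS ?lt ?tk //; apply; lia.
Qed.

End RibbonOfComposition.

Section GradedLattice.
Context {disp : Order.disp_t} {L : finTBLatticeType disp}.
Variable rk : L -> nat.
Hypothesis rk_graded : is_rank rk.

Local Notation bot := (Order.bottom : L).
Local Notation top := (Order.top : L).
Local Notation n := (rk top).

Lemma exists_cover_le (x y : L) : (x < y)%O -> exists2 z, covers x z & (z <= y)%O.
Proof.
move=> xy; pose below z := #|[set w : L | (w < z)%O]|.
case: (@arg_minnP _ y (fun z => (x < z)%O && (z <= y)%O) below); first by rewrite xy lexx.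
move=> z /andP[xz zy] zmin; exists z => //; rewrite /covers xz; apply/forallP => w.
apply/negP => /andP[xw wz]; have := zmin w; rewrite xw (le_trans (ltW wz) zy) => /(_ isT).
apply/negP; rewrite -ltnNge; apply: proper_card; apply/properP; split.
  by apply/subsetP => v; rewrite !inE => /lt_trans; apply.
by exists w; rewrite !inE ?ltxx.
Qed.

Lemma rk_lt (x y : L) : (x < y)%O -> rk x < rk y.
Proof.
have [k] := ubnP #|[set w : L | ~~ (w <= x)%O]|; elim: k x => // k IH x hk xy.
have [z xz zy] := exists_cover_le xy; rewrite -(rk_graded.2 _ _ xz).
move: zy; rewrite le_eqVlt => /orP[/eqP->//|zy]; apply: ltnW; apply: IH zy.
suff : #|[set w : L | ~~ (w <= z)%O]| < #|[set w : L | ~~ (w <= x)%O]| by lia.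
apply: proper_card; apply/properP; split.
  apply/subsetP => w; rewrite !inE; apply: contra => wx.
  by apply: le_trans wx (ltW (andP xz).1).
by exists z; rewrite !inE ?lexx // lt_geF // (andP xz).1.
Qed.

Lemma rk_le (x y : L) : (x <= y)%O -> rk x <= rk y.
Proof. by rewrite le_eqVlt => /orP[/eqP->//|/rk_lt/ltnW]. Qed.

Lemma le_rk_eq (x y : L) : (x <= y)%O -> rk x = rk y -> x = y.
Proof. by rewrite le_eqVlt => /orP[/eqP//|/rk_lt]; rewrite ltn_neqAle => /andP[/eqP]. Qed.

Lemma covers_rk (x y : L) : (x <= y)%O -> rk y = (rk x).+1 -> covers x y.
Proof.
move=> xy ry; have xy' : (x < y)%O.
  by rewrite lt_neqAle xy andbT; apply/eqP => yx; move: ry; rewrite yx; lia.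
rewrite /covers xy'; apply/forallP => z; apply/negP => /andP[/rk_lt xz /rk_lt zy].
by move: zy; rewrite ry; lia.
Qed.

Lemma atom_rk (a : L) : atom a -> rk a = 1.
Proof. by move=> /(rk_graded.2 _ _); rewrite rk_graded.1. Qed.

Definition at_rank (M : seq L) (r : nat) : L := nth bot (bot :: M) r.

Lemma maxchain_covers (M : seq L) r : maxchainP M -> r < size M ->
  covers (at_rank M r) (at_rank M r.+1).
Proof. by move=> /andP[/(pathP bot) M_path _] /M_path. Qed.

Lemma maxchain_top (M : seq L) : maxchainP M -> at_rank M (size M) = top.
Proof. by move=> /andP[_ /eqP]; rewrite (last_nth bot). Qed.

Lemma maxchain_rk (M : seq L) r : maxchainP M -> r <= size M -> rk (at_rank M r) = r.
Proof.
move=> M_max; elim: r => [|r IH] rM; first exact: rk_graded.1.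
by rewrite (rk_graded.2 _ _ (maxchain_covers M_max rM)) IH // ltnW.
Qed.

Lemma maxchain_size (M : seq L) : maxchainP M -> size M = n.
Proof. by move=> M_max; rewrite -(maxchain_top M_max) maxchain_rk. Qed.

Lemma at_rank_mono (M : seq L) r q : maxchainP M -> r <= q -> q <= size M ->
  (at_rank M r <= at_rank M q)%O.
Proof.
move=> M_max rq; elim: q rq => [|q IH]; first by rewrite leqn0 => /eqP->.
rewrite leq_eqVlt => /orP[/eqP-> _|]; first exact: lexx.
rewrite ltnS => rq qM; apply: le_trans (IH rq (ltnW qM)) _.
by case/andP: (maxchain_covers M_max qM) => /ltW.
Qed.

Lemma at_rank_mem (M : seq L) r : r <= size M -> at_rank M r \in bot :: M.
Proof. by move=> rM; rewrite /at_rank mem_nth. Qed.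

Lemma mem_maxchain (M : seq L) x : maxchainP M -> x \in bot :: M ->
  rk x <= size M /\ x = at_rank M (rk x).
Proof. by move=> M_max /(nthP bot) [i iM <-]; rewrite -/(at_rank M i) maxchain_rk. Qed.

Lemma maxchain_comparable (M : seq L) x y : maxchainP M ->
  x \in bot :: M -> y \in bot :: M -> (x <= y)%O || (y <= x)%O.
Proof.
move=> M_max /(mem_maxchain M_max) [xM ->] /(mem_maxchain M_max) [yM ->].
by case: (leqP (rk x) (rk y)) => h; [rewrite at_rank_mono | rewrite orbC at_rank_mono // ltnW].
Qed.

Definition maxchain_fun (f : nat -> L) : Prop :=
  [/\ f 0 = bot, f n = top & forall r, r < n -> covers (f r) (f r.+1)].

Definition chain_of (f : nat -> L) : seq L := map f (iota 1 n).

Lemma size_chain_of f : size (chain_of f) = n.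
Proof. by rewrite size_map size_iota. Qed.

Lemma at_rank_chain_of f r : f 0 = bot -> r <= n -> at_rank (chain_of f) r = f r.
Proof.
case: r => [f0 _|r _ rn]; first by rewrite /at_rank /= f0.
by rewrite /at_rank /= /chain_of (nth_map 0) ?size_iota // nth_iota.
Qed.

Lemma maxchain_chain_of f : maxchain_fun f -> maxchainP (chain_of f).
Proof.
case=> f0 fn fcov; apply/andP; split.
  apply/(pathP bot) => i; rewrite size_chain_of => iN.
  rewrite -/(at_rank (chain_of f) i) -[nth bot (chain_of f) i]/(at_rank (chain_of f) i.+1).
  by rewrite !at_rank_chain_of // ?fcov // ltnW.
by rewrite (last_nth bot) -/(at_rank _ _) size_chain_of at_rank_chain_of // fn.
Qed.

Lemma maxchain_fun_at_rank (M : seq L) : maxchainP M -> maxchain_fun (at_rank M).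
Proof.
move=> M_max; have size_M := maxchain_size M_max.
by split=> [//||r]; rewrite -size_M ?maxchain_top //; apply: maxchain_covers.
Qed.

Definition splice (f f' : nat -> L) (a b r : nat) : L :=
  if a <= r <= b then f r else f' r.

Lemma maxchain_fun_splice f f' a b : maxchain_fun f -> maxchain_fun f' ->
  a <= b -> b <= n -> f a = f' a -> f b = f' b -> maxchain_fun (splice f f' a b).
Proof.
move=> [f0 fn fcov] [f'0 f'n f'cov] ab bn fa fb.
have outside r : (r <= a) || (b <= r) -> splice f f' a b r = f' r.
  rewrite /splice; case: ifP => // /andP[ar rb] /orP[ra|br].
    by have -> : r = a by apply/anti_leq; rewrite ra ar.
  by have -> : r = b by apply/anti_leq; rewrite br rb.
split; first by rewrite outside.
  by rewrite outside ?bn ?orbT.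
move=> r rn; case: (boolP ((a <= r) && (r < b))) => [/andP[ar rb]|].
  by rewrite /splice ar (ltnW rb) leqW ?rb //; apply: fcov.
rewrite negb_and -!ltnNge => out.
by rewrite !outside ?f'cov //; case/orP: out; lia.
Qed.

Lemma exists_cover_path (x : L) (g : {set L}) :
  {in g &, forall y z, (y <= z)%O || (z <= y)%O} -> {in g, forall y, (x <= y)%O} ->
  exists p, [/\ path covers x p, last x p = top & {subset g <= x :: p}].
Proof.
have [k] := ubnP (n - rk x); elim: k x g => // k IH x g hk g_chain x_le.
case: (eqVneq x top) => [xt|xt].
  exists [::]; rewrite xt; split => // y yg; rewrite inE; apply/eqP/le_anti.
  by rewrite lex1 -xt (x_le y yg).
have x_top : (x < top)%O by rewrite lt_neqAle xt lex1.
have [m [xm m_le]] : exists m, (x < m)%O /\ {in g :\ x, forall y, (m <= y)%O}.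
  case: (set_0Vmem (g :\ x)) => [->|[y0 y0g]]; first by exists top; split => // y; rewrite inE.
  case: (@arg_minnP _ y0 (mem (g :\ x)) rk y0g) => m /setD1P[mx mg] m_min.
  exists m; split; first by rewrite lt_neqAle eq_sym mx x_le.
  move=> y yg; have /setD1P[_ yg'] := yg.
  case/orP: (g_chain _ _ mg yg') => // ym.
  by rewrite (le_rk_eq ym) //; apply/eqP; rewrite eqn_leq rk_le // m_min.
have [z xz zm] := exists_cover_le xm.
have [|||p [p_path p_last g_sub]] := IH z (g :\ x).
- by have := rk_lt x_top; rewrite (rk_graded.2 _ _ xz); lia.
- by move=> y1 y2 /setD1P[_ h1] /setD1P[_ h2]; apply: g_chain.
- by move=> y yg; apply: le_trans zm (m_le y yg).
exists (z :: p); split => //=; first by rewrite xz.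
move=> y yg; rewrite inE; case: (eqVneq y x) => //= yx.
by apply: g_sub; apply/setD1P.
Qed.

Lemma exists_maxchain_sup (g : {set L}) :
  {in g &, forall y z, (y <= z)%O || (z <= y)%O} ->
  exists M, maxchainP M /\ {subset g <= bot :: M}.
Proof.
move=> g_chain; have [p [p_path p_last g_sub]] := exists_cover_path g_chain (fun y _ => le0x y).
by exists p; rewrite /maxchainP p_path p_last eqxx.
Qed.

End GradedLattice.

Section GeometricLattice.
Context {disp : Order.disp_t} {L : finTBLatticeType disp}.
Variable rk : L -> nat.
Hypothesis geom : geometric rk.
Let rk_graded : is_rank rk := geom.1.

Local Notation bot := (Order.bottom : L).
Local Notation top := (Order.top : L).
Local Notation n := (rk top).

Lemma meet_atom_bot (a u : L) : atom a -> ~~ (a <= u)%O -> Order.meet a u = bot.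
Proof.
move=> /andP[_ /forallP a_min] au; have ua_lt : (Order.meet a u < a)%O.
  by rewrite lt_neqAle leIl andbT; apply: contra au => /eqP <-; rewrite leIr.
have := a_min (Order.meet a u); rewrite ua_lt andbT lt_neqAle le0x andbT negbK.
by move/eqP.
Qed.

Lemma covers_join_atom (a u : L) : atom a -> ~~ (a <= u)%O ->
  covers u (Order.join u a).
Proof.
move=> a_atom au; have sm := geom.2.1 u a.
rewrite meetC meet_atom_bot // rk_graded.1 (atom_rk rk_graded a_atom) in sm.
apply: (covers_rk rk_graded); first exact: leUl.
have : (u < Order.join u a)%O.
  by rewrite lt_neqAle leUl andbT; apply: contra au => /eqP->; rewrite leUr.
by move/(rk_lt rk_graded); lia.
Qed.

Lemma covers_atom_exists (u v : L) : covers u v ->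
  exists a, [/\ atom a, (a <= v)%O & ~~ (a <= u)%O].
Proof.
move=> /andP[uv _].
case: (boolP [exists a, [&& atom a, (a <= v)%O & ~~ (a <= u)%O]]).
  by move=> /existsP[a /and3P[]]; exists a.
move=> no_atom; suff vu : (v <= u)%O by have := lt_le_trans uv vu; rewrite ltxx.
rewrite {1}(geom.2.2 v); apply/joinsP => a /andP[a_atom av].
by apply: contraNT no_atom => au; apply/existsP; exists a; rewrite a_atom av au.
Qed.

Lemma covers_joinE (u v a : L) : covers u v -> atom a -> (a <= v)%O -> ~~ (a <= u)%O ->
  Order.join u a = v.
Proof.
move=> uv a_atom av au; apply: (le_rk_eq rk_graded).
  by rewrite leUx av; case/andP: uv => /ltW ->.
by rewrite (rk_graded.2 _ _ (covers_join_atom a_atom au)) (rk_graded.2 _ _ uv).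
Qed.

Variable ao : seq L.
Hypothesis ao_ordering : atom_ordering ao.

Local Notation idx a := (index a ao).

Lemma idx_inj (a b : L) : atom a -> atom b -> idx a = idx b -> a = b.
Proof.
move=> a_atom b_atom ab; rewrite -(nth_index bot (s := ao) (x := a)) ?ab ?nth_index //.
  by rewrite ao_ordering.2.
by rewrite ao_ordering.2.
Qed.

Lemma minlab_spec (u v : L) : covers u v ->
  [/\ atom (minlab ao u v), (minlab ao u v <= v)%O, ~~ (minlab ao u v <= u)%O &
      forall b, atom b -> (b <= v)%O -> ~~ (b <= u)%O -> idx (minlab ao u v) <= idx b].
Proof.
move=> uv; set p := fun a : L => (a <= v)%O && ~~ (a <= u)%O.
have has_p : has p ao.
  have [a [a_atom av au]] := covers_atom_exists uv.
  by apply/hasP; exists a; rewrite ?ao_ordering.2 // /p av au.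
have idx_min : idx (minlab ao u v) = find p ao.
  by rewrite /minlab index_uniq -?has_find //; case: ao_ordering.
have /andP[mv mu] : p (minlab ao u v) by apply: nth_find.
split => //; first by rewrite -ao_ordering.2 /minlab mem_nth -?has_find.
move=> b b_atom bv bu; rewrite idx_min leqNgt; apply/negP => /(before_find bot).
by rewrite nth_index ?ao_ordering.2 // /p bv bu.
Qed.

Definition label (M : seq L) (r : nat) : L := minlab ao (at_rank M r) (at_rank M r.+1).

Definition labword_fun (f : nat -> L) : seq nat :=
  map (fun r => idx (minlab ao (f r) (f r.+1))) (iota 0 n).

Lemma labels_label (M : seq L) : labels ao M = map (label M) (iota 0 (size M)).
Proof.
apply: (eq_from_nth (x0 := bot)); first by rewrite size_pairmap size_map size_iota.
move=> i; rewrite size_pairmap => iM.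
by rewrite (nth_pairmap bot) // (nth_map 0) ?size_iota // nth_iota.
Qed.

Lemma nth_labels (M : seq L) k : maxchainP M -> k < n -> nth bot (labels ao M) k = label M k.
Proof.
move=> M_max kn; have kM : k < size M by rewrite (maxchain_size rk_graded M_max).
by rewrite labels_label (nth_map 0) ?nth_iota ?size_iota.
Qed.

Lemma labword_at_rank (M : seq L) : maxchainP M -> labword ao M = labword_fun (at_rank M).
Proof.
by move=> M_max; rewrite /labword labels_label -map_comp (maxchain_size rk_graded M_max).
Qed.

Lemma labword_chain_of f : maxchain_fun rk f -> labword ao (chain_of rk f) = labword_fun f.
Proof.
move=> f_max; rewrite labword_at_rank; last exact: maxchain_chain_of.
apply/eq_in_map => r; rewrite mem_iota add0n => /andP[_ rn].
by case: f_max => f0 _ _; rewrite !at_rank_chain_of // ltnW.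
Qed.

Section Labels.
Variable M : seq L.
Hypothesis M_max : maxchainP M.

Let size_M : size M = n := maxchain_size rk_graded M_max.

Lemma label_spec r : r < n ->
  [/\ atom (label M r), (label M r <= at_rank M r.+1)%O, ~~ (label M r <= at_rank M r)%O &
      forall b, atom b -> (b <= at_rank M r.+1)%O -> ~~ (b <= at_rank M r)%O ->
        idx (label M r) <= idx b].
Proof. by move=> rn; apply/minlab_spec/maxchain_covers; rewrite ?size_M. Qed.

Lemma join_label r : r < n -> Order.join (at_rank M r) (label M r) = at_rank M r.+1.
Proof.
move=> rn; have [? ? ? _] := label_spec rn.
by apply: covers_joinE => //; apply: maxchain_covers; rewrite ?size_M.
Qed.

Lemma label_neq r q : r < q -> q < n -> label M r != label M q.
Proof.
move=> rq qn; have [_ r_le _ _] := label_spec (ltn_trans rq qn).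
have [_ _ q_nle _] := label_spec qn.
move: q_nle; apply: contra => /eqP <-; apply: le_trans r_le _.
by apply: at_rank_mono; rewrite // size_M ltnW.
Qed.

Lemma idx_label_neq r q : r < q -> q < n -> idx (label M r) != idx (label M q).
Proof.
move=> rq qn; apply/eqP => E; move/eqP: (label_neq rq qn); apply; apply: idx_inj E.
  by case: (label_spec (ltn_trans rq qn)).
by case: (label_spec qn).
Qed.

Definition increasing_on (a b : nat) : Prop :=
  forall q, a <= q -> q.+1 < b -> idx (label M q) < idx (label M q.+1).

Lemma increasing_label_le a b r c : increasing_on a b -> a <= r -> r < b -> b <= n ->
  atom c -> (c <= at_rank M b)%O -> ~~ (c <= at_rank M r)%O -> idx (label M r) <= idx c.
Proof.
move=> incr ar rb bn c_atom cb cr.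
have [q [rq qb cq cq1]] := exists_crossing (P := fun t => (c <= at_rank M t)%O) (ltnW rb) cr cb.
have [_ _ _ q_min] := label_spec (leq_trans qb bn).
apply: leq_trans (q_min _ c_atom cq1 cq); rewrite leq_eqVlt in rq.
case/orP: rq => [/eqP->//|rq]; apply: ltnW.
apply: (homo_ltn_itv (r := fun i j => i < j) (f := fun t => idx (label M t)) (a := a) (b := b.-1)).
- exact: ltn_trans.
- by move=> t /andP[a_t tb]; apply: incr => //; lia.
all: lia.
Qed.

Lemma increasing_label_lt a b q y : increasing_on a b -> a <= q -> q < b -> b <= n ->
  covers (at_rank M q) y -> (y <= at_rank M b)%O -> y != at_rank M q.+1 ->
  idx (label M q) < idx (minlab ao (at_rank M q) y).
Proof.
move=> incr aq qb bn qy yb y_neq; have [c_atom cy cq _] := minlab_spec qy.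
rewrite ltn_neqAle (increasing_label_le incr aq qb bn c_atom (le_trans cy yb) cq) andbT.
apply: contra y_neq => /eqP/idx_inj E; have [q_atom _ _ _] := label_spec (leq_trans qb bn).
by rewrite -(covers_joinE qy c_atom cy cq) -(E q_atom c_atom) join_label ?(leq_trans qb bn).
Qed.

End Labels.

Lemma increasing_splice_lexlt (M M' : seq L) a b x :
  maxchainP M -> maxchainP M' -> increasing_on M a b -> a <= x <= b -> b <= n ->
  at_rank M a = at_rank M' a -> at_rank M b = at_rank M' b -> at_rank M x != at_rank M' x ->
  lexlt (labword_fun (splice (at_rank M) (at_rank M') a b)) (labword ao M').
Proof.
move=> M_max M'_max incr /andP[ax xb] bn Ma Mb Mx.
have size_M' := maxchain_size rk_graded M'_max.
set N := splice _ _ a b; rewrite labword_at_rank //.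
have inside r : a <= r <= b -> N r = at_rank M r by rewrite /N /splice => ->.
have below r : r <= a -> N r = at_rank M' r.
  rewrite leq_eqVlt => /orP[/eqP->|ra]; first by rewrite inside ?leqnn ?(leq_trans ax xb).
  by rewrite /N /splice leqNgt ra.
have ex_diff : exists r, N r != at_rank M' r by exists x; rewrite inside ?ax.
case: (ex_minnP ex_diff) => m Nm m_min.
have mx : m <= x by apply: m_min; rewrite inside ?ax.
have am : a < m by rewrite ltnNge; apply: contra Nm => /below ->.
have agree r : r < m -> N r = at_rank M' r.
  by move=> rm; apply/eqP; apply: contraTT rm => /m_min; rewrite -leqNgt.
set q := m.-1; have qm : q.+1 = m by rewrite prednK //; lia.
have [Mq Nm'] : at_rank M q = at_rank M' q /\ N m = at_rank M m.
  by rewrite -(agree q) ?inside; try lia.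
(* The words agree up to rank [q = m.-1], where [M] takes a smaller label than [M']. *)
apply: (lexlt_map_iota (r := q)); first lia.
  by move=> t /andP[_ tq]; rewrite !agree //; lia.
rewrite /= qm Nm' -qm -/(label M q) -Mq (inside q); last lia.
apply: (increasing_label_lt M_max incr (b := b)); try lia.
- by rewrite Mq; apply: maxchain_covers; rewrite ?size_M'; lia.
- by rewrite Mb; apply: at_rank_mono; rewrite ?size_M'; lia.
- by rewrite qm -Nm' eq_sym.
Qed.

Definition swap (M : seq L) (x r : nat) : L :=
  if r == x then Order.join (at_rank M x.-1) (label M x) else at_rank M r.

Section Swap.
Variables (M : seq L) (x : nat).
Hypotheses (M_max : maxchainP M) (x_range : 0 < x < n).

Let size_M : size M = n := maxchain_size rk_graded M_max.

Let label_x_nle : ~~ (label M x <= at_rank M x.-1)%O.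
Proof.
have [_ _ x_nle _] := label_spec M_max (andP x_range).2; apply: contra x_nle => le_x.
by apply: le_trans le_x _; apply: at_rank_mono; rewrite ?leq_pred ?size_M //; lia.
Qed.

Let label_x_atom : atom (label M x).
Proof. by case: (label_spec M_max (andP x_range).2). Qed.

Lemma maxchain_fun_swap : maxchain_fun rk (swap M x).
Proof.
have [x0 xn] := andP x_range.
split; rewrite /swap ?(ltn_eqF x0) ?(gtn_eqF xn) -?size_M ?maxchain_top //.
move=> r rn; case: (eqVneq r x) => [->|rx].
  rewrite (gtn_eqF (ltnSn x)); apply: (covers_rk rk_graded).
    rewrite leUx; case: (label_spec M_max xn) => _ -> _ _.
    by rewrite at_rank_mono ?size_M //; lia.
  rewrite (rk_graded.2 _ _ (covers_join_atom label_x_atom label_x_nle)).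
  rewrite !(maxchain_rk rk_graded) ?size_M ?prednK //.
  exact: leq_trans (leq_pred x) (ltnW xn).
case: (eqVneq r.+1 x) => [rx1|_].
  have r_eq : r = x.-1 by rewrite -rx1.
  by rewrite r_eq; apply: covers_join_atom.
by apply: maxchain_covers; rewrite // size_M.
Qed.

Lemma swap_lexlt : idx (label M x) < idx (label M x.-1) ->
  lexlt (labword_fun (swap M x)) (labword ao M).
Proof.
have [x0 xn] := andP x_range; move=> desc; rewrite labword_at_rank //.
apply: (lexlt_map_iota (r := x.-1)); first lia.
  by move=> q /andP[_ qx]; rewrite /swap !ltn_eqF //; lia.
rewrite /swap ltn_eqF ?prednK ?eqxx //=; try lia.
apply: leq_ltn_trans (_ : idx _ <= idx (label M x)) _; last by rewrite /label prednK in desc.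
have [_ _ _ join_min] := minlab_spec (covers_join_atom label_x_atom label_x_nle).
by apply: join_min; rewrite ?leUr.
Qed.

Lemma mem_chain_of_swap y : y \in bot :: M -> y != at_rank M x ->
  y \in bot :: chain_of rk (swap M x).
Proof.
move=> /(mem_maxchain rk_graded M_max) [yM ->] y_neq.
have swap_y : at_rank (chain_of rk (swap M x)) (rk y) = at_rank M (rk y).
  rewrite at_rank_chain_of -?size_M //; last by case: maxchain_fun_swap.
  by rewrite /swap; case: (eqVneq (rk y) x) y_neq => // ->; rewrite eqxx.
by rewrite -swap_y at_rank_mem // size_chain_of -size_M.
Qed.

End Swap.

Lemma exists_first (g : {set L}) : {in g &, forall y z, (y <= z)%O || (z <= y)%O} ->
  exists M, is_first ao g M.
Proof.
move=> g_chain.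
pose cands := [seq M <- map val (enum {: n.-tuple L}) |
                maxchainP M && [forall y in g, y \in bot :: M]].
have mem_cands M : maxchainP M -> {subset g <= bot :: M} -> M \in cands.
  move=> M_max g_sub; rewrite mem_filter M_max /=; apply/andP; split.
    by apply/forall_inP => y /g_sub.
  apply/mapP; exists (Tuple (introT eqP (maxchain_size rk_graded M_max))) => //.
  by rewrite mem_enum.
have [M0 [M0_max g_sub0]] := exists_maxchain_sup rk_graded g_chain.
have : cands != [::] by apply: contraTneq (mem_cands _ M0_max g_sub0) => ->.
case/(exists_lexle_min (labword ao)) => M; rewrite mem_filter.
move=> /andP[/andP[M_max /forall_inP g_sub] _] M_min.
by exists M; split => // M' M'_max M'_sub; apply/M_min/mem_cands.
Qed.

Lemma size_labels (M : seq L) : maxchainP M -> size (labels ao M) = n.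
Proof. by move=> M_max; rewrite size_pairmap (maxchain_size rk_graded M_max). Qed.

Lemma join_take_labels (M : seq L) j : maxchainP M -> j <= n ->
  \big[Order.join/bot]_(y <- take j (labels ao M)) y = at_rank M j.
Proof.
move=> M_max; elim: j => [|j IH] jn; first by rewrite take0 big_nil.
rewrite (take_nth bot) ?size_labels // -cats1 big_cat big_seq1 IH ?(ltnW jn) //.
by rewrite nth_labels //; apply: join_label.
Qed.

Lemma labelsP (M : seq L) a : maxchainP M ->
  reflect (exists2 k, k < n & a = label M k) (a \in labels ao M).
Proof.
move=> M_max; rewrite labels_label (maxchain_size rk_graded M_max).
apply: (iffP mapP) => [[k]|[k kn ->]]; last by exists k; rewrite ?mem_iota.
by rewrite mem_iota => /andP[_ kn] ->; exists k.
Qed.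

Lemma labels_nbc_indep (M : seq L) : maxchainP M -> nbc_indep rk ao (labels ao M).
Proof.
move=> M_max; have size_M := maxchain_size rk_graded M_max.
split.
- by apply/allP => a /(labelsP _ M_max) [k kn ->]; case: (label_spec M_max kn).
- rewrite labels_label size_M map_inj_in_uniq ?iota_uniq // => p q.
  rewrite !mem_iota !add0n => /andP[_ pn] /andP[_ qn] E.
  case: (ltngtP p q) => // [pq|qp]; first by move: (label_neq M_max pq qn); rewrite E eqxx.
  by move: (label_neq M_max qp pn); rewrite E eqxx.
- rewrite size_labels // -[labels _ _]take_size size_labels // join_take_labels //.
  by rewrite (maxchain_rk rk_graded) ?size_M.
move=> a a_atom a_notin _.
have a_nle0 : ~~ (a <= at_rank M 0)%O.
  by case/andP: a_atom => a_pos _; rewrite /at_rank /= lt_geF.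
have a_len : (a <= at_rank M n)%O by rewrite -size_M maxchain_top // lex1.
have [q [_ qn aq aq1]] := exists_crossing (P := fun t => (a <= at_rank M t)%O) (leq0n n) a_nle0 a_len.
have [q_atom _ _ q_min] := label_spec M_max qn.
exists (label M q); first by apply/labelsP => //; exists q.
rewrite /aord ltn_neqAle q_min // andbT.
by apply: contra a_notin => /eqP/(idx_inj q_atom a_atom) <-; apply/labelsP => //; exists q.
Qed.

Lemma labels_nbc_plus (M : seq L) : maxchainP M -> nbc_plus rk ao (labels ao M).
Proof.
move=> M_max; split; [exact: labels_nbc_indep | split; first exact: size_labels].
move=> j; rewrite size_labels // => jn.
by rewrite nth_labels // !join_take_labels // ltnW.
Qed.

Section RankSelection.
Variable s : seq nat.
Hypothesis s_range : all (fun x => 0 < x < n) s.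

Let s_rangeP x : x \in s -> 0 < x < n.
Proof. exact: (allP s_range). Qed.

Definition rank_sel (M : seq L) : {set L} := [set y | (y \in M) && (rk y \in s)].

Lemma sub_rank_sel (M : seq L) (A : {set L}) : {subset A <= bot :: M} ->
  {in A, forall y, rk y \in s} -> A \subset rank_sel M.
Proof.
move=> A_sub A_s; apply/subsetP => y yA; rewrite inE A_s // andbT.
have := A_sub y yA; rewrite inE => /orP[/eqP y0|//].
by have := s_rangeP (A_s y yA); rewrite y0 rk_graded.1.
Qed.

Section MaxChain.
Variable M : seq L.
Hypothesis M_max : maxchainP M.

Lemma rank_selP y : y \in rank_sel M -> rk y \in s /\ y = at_rank M (rk y).
Proof.
rewrite inE => /andP[yM ys]; split => //.
have yM' : y \in bot :: M by rewrite inE yM orbT.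
by case: (mem_maxchain rk_graded M_max yM').
Qed.

Lemma at_rank_rank_sel r : r \in s -> at_rank M r \in rank_sel M.
Proof.
move=> rs; have /andP[r0 rn] := s_rangeP rs.
have size_M := maxchain_size rk_graded M_max.
rewrite (subsetP (sub_rank_sel (A := [set at_rank M r]) _ _)) ?set11 // => y; rewrite inE => /eqP->.
  by rewrite at_rank_mem // size_M ltnW.
by rewrite (maxchain_rk rk_graded) // size_M ltnW.
Qed.

Lemma maxchainS_rank_sel : maxchainS rk s (rank_sel M).
Proof.
have sel_chain : chainS rk s (rank_sel M).
  apply/andP; split; first by apply/forall_inP => y /rank_selP[].
  apply/forall_inP => y; rewrite inE => /andP[yM _]; apply/forall_inP => z.
  by rewrite inE => /andP[zM _]; apply: (maxchain_comparable rk_graded M_max); rewrite inE ?yM ?zM orbT.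
rewrite /maxchainS sel_chain; apply/forallP => g; apply/implyP => /andP[/andP[g_s g_chain] sel_g].
rewrite eqEsubset sel_g andbT; apply/subsetP => z zg.
have zs : rk z \in s by apply: (forall_inP g_s).
have Mz_g : at_rank M (rk z) \in g := subsetP sel_g _ (at_rank_rank_sel zs).
have/andP[_ zn] := s_rangeP zs.
have Mz_rk : rk (at_rank M (rk z)) = rk z.
  by rewrite (maxchain_rk rk_graded) // (maxchain_size rk_graded M_max) ltnW.
have [zM|Mz] := orP (forall_inP (forall_inP g_chain z zg) _ Mz_g).
  by rewrite (le_rk_eq rk_graded zM) ?at_rank_rank_sel.
by rewrite -(le_rk_eq rk_graded Mz) ?at_rank_rank_sel.
Qed.

End MaxChain.

Lemma maxchainS_comparable (g : {set L}) : maxchainS rk s g ->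
  {in g &, forall y z, (y <= z)%O || (z <= y)%O}.
Proof. by move=> /andP[/andP[_ /forall_inP g_chain] _] y z /g_chain/forall_inP; apply. Qed.

Lemma maxchainS_eq_rank_sel (g : {set L}) (M : seq L) : maxchainS rk s g -> maxchainP M ->
  {subset g <= bot :: M} -> g = rank_sel M.
Proof.
move=> /andP[/andP[/forall_inP g_s _] /forallP g_maxl] M_max g_sub.
have /andP[sel_chain _] := maxchainS_rank_sel M_max.
by apply/esym/eqP; have := g_maxl (rank_sel M); rewrite sel_chain sub_rank_sel.
Qed.

Section FirstChain.
Variables (g : {set L}) (M : seq L).
Hypotheses (g_max : maxchainS rk s g) (M_first : is_first ao g M).

Let M_max : maxchainP M := let: And3 M_max _ _ := M_first in M_max.
Let g_sub : {subset g <= bot :: M} := let: And3 _ g_sub _ := M_first in g_sub.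
Let M_min : forall M', maxchainP M' -> {subset g <= bot :: M'} -> lexle (labword ao M) (labword ao M') :=
  let: And3 _ _ M_min := M_first in M_min.
Let size_M : size M = n := maxchain_size rk_graded M_max.

Lemma first_rank_sel : g = rank_sel M.
Proof. exact: maxchainS_eq_rank_sel. Qed.

Lemma first_ascent x : 0 < x < n -> x \notin s -> idx (label M x.-1) < idx (label M x).
Proof.
move=> x_range xs; have /andP[x0 xn] := x_range.
have x1x : x.-1 < x by rewrite prednK.
rewrite ltn_neqAle (idx_label_neq M_max x1x xn) /=.
rewrite leqNgt; apply/negP => desc.
(* [at_rank M x] is not in [g], so swapping the descent at [x] keeps [g] and lowers the word. *)
have Mx_g : at_rank M x \notin g.
  by rewrite first_rank_sel inE negb_and (maxchain_rk rk_graded) ?xs ?orbT // size_M ltnW.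
have g_sub' : {subset g <= bot :: chain_of rk (swap M x)}.
  move=> y yg; apply: mem_chain_of_swap => //; first exact: g_sub.
  by apply: contraNneq Mx_g => <-.
have swap_max := maxchain_fun_swap M_max x_range.
have := M_min (maxchain_chain_of swap_max) g_sub'.
rewrite (labword_chain_of swap_max) => /lexle_lt_trans.
by move/(_ _ (swap_lexlt M_max x_range desc)); rewrite lexlt_irr.
Qed.

Lemma first_increasing_on x a b : idx (label M x.-1) < idx (label M x) ->
  a < x < b -> b <= n -> (forall y, a < y < b -> y != x -> y \notin s) -> increasing_on M a b.
Proof.
move=> asc /andP[ax xb] bn gap q aq qb.
case: (eqVneq q.+1 x) => [qx|qx]; first by move: asc; rewrite -qx.
apply: (first_ascent (x := q.+1)); first lia.
by apply: gap; rewrite // ltnS aq.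
Qed.

Lemma first_agree x (M' : seq L) r : x \in s -> maxchainP M' ->
  {subset g :\ at_rank M x <= bot :: M'} -> r \in s -> r != x -> at_rank M r = at_rank M' r.
Proof.
move=> xs M'_max g_sub' rs rx; have [/andP[_ xn] /andP[_ rn]] := (s_rangeP xs, s_rangeP rs).
have rk_M t : t < n -> rk (at_rank M t) = t by move=> tn; rewrite (maxchain_rk rk_graded) // size_M ltnW.
have Mr_g : at_rank M r \in g :\ at_rank M x.
  rewrite !inE first_rank_sel at_rank_rank_sel // andbT.
  by apply: contra rx => /eqP E; rewrite -(rk_M r rn) E rk_M.
by have [_ E] := mem_maxchain rk_graded M'_max (g_sub' _ Mr_g); rewrite {1}E rk_M.
Qed.

Lemma first_ascent_lexlt x (M' : seq L) : x \in s ->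
  idx (label M x.-1) < idx (label M x) -> maxchainP M' ->
  {subset g :\ at_rank M x <= bot :: M'} -> at_rank M x \notin bot :: M' ->
  lexlt (labword ao M) (labword ao M').
Proof.
move=> xs asc M'_max g_sub' Mx_M'; have /andP[x0 xn] := s_rangeP xs.
have size_M' := maxchain_size rk_graded M'_max.
have agree := first_agree xs M'_max g_sub'.
(* Let [a < x < b] be the neighbours of [x] in [s] extended by [0] and [n]: on [a, b] the chain
   [M] is increasing, so splicing it into [M'] keeps [g] and lowers the label word. *)
have P0 : (0 == 0) || (0 \in s) by rewrite eqxx.
have Pn : (n == n) || (n \in s) by rewrite eqxx.
have [a [ax a_s a_gap]] := nearest_below (P := fun t => (t == 0) || (t \in s)) x0 P0.
have [b [xb bn b_s b_gap]] := nearest_above (P := fun t => (t == n) || (t \in s)) xn Pn.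
have Ma : at_rank M a = at_rank M' a.
  by case/orP: a_s => [/eqP->//|a_in]; apply: agree; rewrite ?ltn_eqF.
have Mb : at_rank M b = at_rank M' b.
  case/orP: b_s => [/eqP->|b_in]; last by apply: agree; rewrite ?gtn_eqF.
  by rewrite -{1}size_M -size_M' !maxchain_top.
have incr : increasing_on M a b.
  apply: (first_increasing_on asc); rewrite ?ax ?xb // => y /andP[ay yb].
  case: (ltngtP y x) => [yx|xy|->]; rewrite ?eqxx // => _.
    by have := a_gap y; rewrite ay yx negb_or => /(_ isT) /andP[].
  by have := b_gap y; rewrite xy yb negb_or => /(_ isT) /andP[].
set N := splice (at_rank M) (at_rank M') a b.
have N_max : maxchain_fun rk N.
  apply: (maxchain_fun_splice (maxchain_fun_at_rank rk_graded M_max)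
    (maxchain_fun_at_rank rk_graded M'_max)) => //.
  exact: leq_trans (ltnW ax) (ltnW xb).
have g_sub_N : {subset g <= bot :: chain_of rk N}.
  move=> y; rewrite first_rank_sel => /(rank_selP M_max)[ys ->]; have /andP[_ rn] := s_rangeP ys.
  have -> : at_rank M (rk y) = N (rk y).
    rewrite /N /splice; case: ifP => // out; apply: agree => //.
    by apply: contraFneq out => ->; rewrite (ltnW ax) (ltnW xb).
  case: N_max => N0 _ _; rewrite -(@at_rank_chain_of _ _ rk) ?(ltnW rn) //.
  by apply: at_rank_mem; rewrite size_chain_of ltnW.
apply: lexle_lt_trans (M_min (maxchain_chain_of N_max) g_sub_N) _.
rewrite labword_chain_of //; apply: (increasing_splice_lexlt (x := x)); rewrite ?(ltnW ax) ?(ltnW xb) //.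
by move: Mx_M'; apply: contraNneq => ->; apply: at_rank_mem; rewrite size_M' ltnW.
Qed.

End FirstChain.

Lemma standard_labelsP (M : seq L) : sorted ltn s -> maxchainP M ->
  standard_filling ao (rib_comp n s) (rib_fill (labels ao M)) <->
  (forall x, 0 < x < n ->
     if x \in s then idx (label M x) < idx (label M x.-1)
     else idx (label M x.-1) < idx (label M x)).
Proof.
move=> s_sorted M_max.
have fillE k : k < n -> idx (rib_fill (labels ao M) k) = idx (label M k).
  by move=> kn; rewrite /rib_fill nth_labels.
rewrite -[standard_filling _ _ _]/(standard_nat_filling _ (fun k => idx (rib_fill (labels ao M) k))).
rewrite standard_rib_compP //; split=> std x x_range; have := std x x_range.
all: have [x0 xn] := andP x_range; rewrite !fillE //; exact: leq_ltn_trans (leq_pred x) xn.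
Qed.

Section ShellingOrder.
Variable F : seq {set L}.
Hypotheses (F_uniq : uniq F) (F_facets : forall g, (g \in F) = maxchainS rk s g).
Hypothesis F_linext : first_linext ao F.

Lemma maxchainS_nth i : i < size F -> maxchainS rk s (nth set0 F i).
Proof. by move=> iF; rewrite -F_facets mem_nth. Qed.

Lemma earlier_face_proper j (G : {set L}) : j < size F -> earlier_face F j G -> G \proper nth set0 F j.
Proof.
move=> jF [G_sub [i ij Gi]]; have iF := ltn_trans ij jF.
rewrite properEneq G_sub andbT; apply: contraTneq Gi => ->; apply/negP => Fji.
have /andP[_ /forallP Fj_maxl] := maxchainS_nth jF.
have /andP[Fi_chain _] := maxchainS_nth iF.
have /eqP Fij := implyP (Fj_maxl (nth set0 F i)) (introT andP (conj Fi_chain Fji)).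
by move: (nth_uniq set0 iF jF F_uniq); rewrite Fij eqxx (ltn_eqF ij).
Qed.

Lemma homology_facetP j : j < size F ->
  homology_facet F j <-> forall G : {set L}, G \proper nth set0 F j -> earlier_face F j G.
Proof.
move=> jF; split=> [hom G G_proper | earlier G G_sub].
  by apply/(hom G (proper_sub G_proper)).
by split; [exact: earlier_face_proper | exact: earlier].
Qed.

Lemma descents_homology_facet j M : j < size F -> is_first ao (nth set0 F j) M ->
  (forall x, x \in s -> idx (label M x) < idx (label M x.-1)) -> homology_facet F j.
Proof.
move=> jF M_first desc; have g_max := maxchainS_nth jF; have [M_max _ M_min] := M_first.
have g_sel := first_rank_sel g_max M_first.
apply/homology_facetP => // G /properP[G_sub [y yg yG]].
(* Swapping the descent at the rank of [y] gives a facet containing [G] with a smaller word. *)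
have [ys y_eq] : rk y \in s /\ y = at_rank M (rk y) by apply: rank_selP; rewrite -?g_sel.
have x_range := s_rangeP ys; set x := rk y in ys y_eq x_range.
have swap_max := maxchain_fun_swap M_max x_range.
set g' := rank_sel (chain_of rk (swap M x)).
have g'_max : maxchainS rk s g' := maxchainS_rank_sel (maxchain_chain_of swap_max).
have G_g' : G \subset g'.
  apply: sub_rank_sel => z zG; have := subsetP G_sub z zG; rewrite g_sel.
    move=> /(rank_selP M_max) [zs z_eq]; have /andP[_ zn] := s_rangeP zs.
    rewrite z_eq; apply: mem_chain_of_swap => //.
      by apply: at_rank_mem; rewrite (maxchain_size rk_graded M_max) ltnW.
    by apply: contraNneq yG => E; rewrite y_eq -E -z_eq.
  by case/(rank_selP M_max).
have [M' M'_first] := exists_first (maxchainS_comparable g'_max).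
have [M'_max M'_sub M'_min] := M'_first.
have M'_lt : lexlt (labword ao M') (labword ao M).
  apply: lexle_lt_trans (swap_lexlt M_max x_range (desc x ys)).
  rewrite -(labword_chain_of swap_max); apply: M'_min (maxchain_chain_of swap_max) _.
  by move=> z; rewrite inE => /andP[zM _]; rewrite inE zM orbT.
have g'F : g' \in F by rewrite F_facets.
split=> //; exists (index g' F); last by rewrite nth_index.
case: (ltngtP (index g' F) j) => // [ji|ij].
  have ji_F : j < index g' F < size F by rewrite ji index_mem.
  by have := F_linext ji_F M_first; rewrite nth_index // => /(_ _ M'_first); rewrite M'_lt.
have := M_min _ M'_max; rewrite -ij nth_index // => /(_ M'_sub).
by move/lexle_lt_trans/(_ M'_lt); rewrite lexlt_irr.
Qed.

Lemma homology_facet_descent j M x : j < size F -> is_first ao (nth set0 F j) M ->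
  homology_facet F j -> x \in s -> idx (label M x) < idx (label M x.-1).
Proof.
move=> jF M_first hom xs; have g_max := maxchainS_nth jF; have [M_max _ _] := M_first.
have g_sel := first_rank_sel g_max M_first.
have /andP[x0 xn] := s_rangeP xs; have x1x : x.-1 < x by rewrite prednK.
rewrite ltn_neqAle eq_sym (idx_label_neq M_max x1x xn) leqNgt /=; apply/negP => asc.
(* An earlier facet contains [g :\ at_rank M x] but not [at_rank M x] (it is not [g]), so its
   first chain has a larger word than [M], against the order of [F]. *)
have Mx_g : at_rank M x \in nth set0 F j by rewrite g_sel at_rank_rank_sel.
have [_ [i ij Gi]] : earlier_face F j (nth set0 F j :\ at_rank M x).
  by apply: (homology_facetP jF).1 => //; rewrite properD1.
have iF := ltn_trans ij jF.
have [M' M'_first] := exists_first (maxchainS_comparable (maxchainS_nth iF)).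
have [M'_max M'_sub _] := M'_first.
have M'_sub_g : {subset nth set0 F j :\ at_rank M x <= bot :: M'}.
  by move=> z /(subsetP Gi); apply: M'_sub.
have : ~~ lexlt (labword ao M) (labword ao M') by apply: F_linext M'_first M_first; rewrite ij.
rewrite (first_ascent_lexlt g_max M_first xs asc M'_max M'_sub_g) //.
apply/negP => Mx_M'; have : nth set0 F j = nth set0 F i.
  rewrite (first_rank_sel (maxchainS_nth iF) M'_first); apply: maxchainS_eq_rank_sel => // z zg.
  by case: (eqVneq z (at_rank M x)) => [->//|zx]; apply/M'_sub_g/setD1P.
by move/eqP; rewrite nth_uniq // (gtn_eqF ij).
Qed.

End ShellingOrder.

End RankSelection.

End GeometricLattice.

Theorem proposition5p20 (disp : Order.disp_t) (L : finTBLatticeType disp)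
  (rk : L -> nat) (n : nat) (ao : seq L) (s : seq nat)
  (Hgeom : geometric rk) (Hn : rk Order.top = n)
  (Hao : atom_ordering ao)
  (Hs_sorted : sorted ltn s) (Hs_range : all (fun x => 0 < x < n) s)
  (F : seq {set L})
  (HFuniq : uniq F) (HFfacets : forall g : {set L}, (g \in F) = maxchainS rk s g)
  (HFlin : first_linext ao F) (HFshell : shelling F) :
  forall j, j < size F ->
    (homology_facet F j <->
     exists M : seq L,
       [/\ is_first ao (nth set0 F j) M,
           standard_filling ao (rib_comp n s) (rib_fill (labels ao M)) &
           nbc_plus rk ao (labels ao M)]).
Proof.
move=> j jF; subst n.
have [M M_first] := exists_first Hgeom ao (maxchainS_comparable (maxchainS_nth HFfacets jF)).
split=> [hom | [M' [M'_first M'_std _]]].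
- have [M_max _ _] := M_first.
  exists M; split => //; last exact: labels_nbc_plus.
  apply/(standard_labelsP Hgeom ao Hs_range Hs_sorted M_max) => x x_range.
  case: ifP => xs.
    exact: (homology_facet_descent Hgeom Hao Hs_range HFuniq HFfacets HFlin jF M_first hom xs).
  by apply: (first_ascent Hgeom Hao Hs_range (maxchainS_nth HFfacets jF) M_first x_range); rewrite xs.
- have [M'_max _ _] := M'_first.
  apply: (descents_homology_facet Hgeom Hao Hs_range HFuniq HFfacets HFlin jF M'_first) => x xs.
  have := (standard_labelsP Hgeom ao Hs_range Hs_sorted M'_max).1 M'_std x.
  by rewrite xs; apply; apply: (allP Hs_range).
Qed.
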